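(* For every $w\in W^{\mathfrak p}$ the number of arcs of the matching $M(\alpha_w)$ that join a negative point to a positive point is even. Consequently the cup diagram $C(w)$ is defined, and the assignment $w\mapsto C(w)$ is a bijection from $W^{\mathfrak p}$ onto the set $C(W^{\mathfrak p})=\{C(w)\mid w\in W^{\mathfrak p}\}$ (i.e. it is injective).
   Context: Let $n\ge 4$ and let $W$ be the Weyl group of type $D_n$: the Coxeter group on generators $s_0,\dots,s_{n-1}$ with $(s_is_j)^{m_{ij}}=e$, where $m_{ii}=1$, $m_{02}=m_{12}=3$, $m_{i,i+1}=3$ for $2\le i\le n-2$, and $m_{ij}=2$ otherwise. Let $l$ be the length function, $W_{\mathfrak p}=\langle s_1,\dots,s_{n-1}\rangle$, and $W^{\mathfrak p}=\{w\in W\mid l(sw)>l(w)\text{ for all } s\in\{s_1,\dots,s_{n-1}\}\}$ the minimal length representatives of $W_{\mathfrak p}\backslash W$. $W$ acts on the right on $\{+,-\}^n$: $s_i$ ($1\le i\le n-1$) swaps entries $i$ and $i+1$; $s_0$ sends $(a_1,a_2,a_3,\dots,a_n)$ to $(-a_2,-a_1,a_3,\dots,a_n)$. For $w\in W^{\mathfrak p}$ put $(\alpha_1,\dots,\alpha_n)=(+,\dots,+)\cdot w$ and $\alpha_{-i}=-\alpha_i$; the sequence $\alpha_w=(\alpha_{-n},\dots,\alpha_{-1},\alpha_1,\dots,\alpha_n)$. Let $P=\{-2n,\dots,-1,1,\dots,2n\}\subset\mathbb R$. The extended labeling of $P$ attached to $w$ puts $+$ at every $j<-n$, $-$ at every $j>n$,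 and $\alpha_j$ at $j$ with $1\le |j|\le n$. The matching $M(\alpha_w)$ is the (unique) set of $2n$ pairwise non-intersecting arcs in the lower half plane, each point of $P$ an endpoint of exactly one arc, each arc joining a point labeled $+$ to a point labeled $-$ with the $+$ point to the left. The cup diagram $C(w)$: the arcs of $M(\alpha_w)$ joining a negative to a positive point are of the form $(-y,y)$; list them as $y_1<y_2<\dots<y_{2k}$. For each $j=1,\dots,k$ replace the arcs $(-y_{2j-1},y_{2j-1})$ and $(-y_{2j},y_{2j})$ by the two arcs joining $-y_{2j}$ to $y_{2j-1}$ and $-y_{2j-1}$ to $y_{2j}$ (these cross once on the line $x=0$ and are called a linked pair). All other arcs are kept. *)

From mathcomp Require Import all_boot all_order all_algebra.
Set Implicit Arguments. Unset Strict Implicit. Unset Printing Implicit Defensive.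
Import Order.TTheory GRing.Theory Num.Theory.
Local Open Scope ring_scope.

(* ---------- The Weyl group W of type D_n ----------------------------------
   Elements of W are represented by words in the generators s_0,...,s_{n-1}
   (a word [:: i1; ...; ik] stands for s_{i1} s_{i2} ... s_{ik}).  Two words
   represent the same element of W iff they act identically in the standard
   faithful realisation of D_n by signed permutations of {±1,...,±n}
   (identity on all other integers). *)

Definition gen_perm (n : nat) (i : 'I_n) (j : int) : int :=
  if (i : nat) == 0%N then
    (if j == 1 then -2 else if j == 2 then -1
     else if j == -1 then 2 else if j == -2 then 1 else j)
  else
    let a : int := (i : nat)%:Z in
    (if j == a then a + 1 else if j == a + 1 then a
     else if j == - a then - (a + 1) else if j == - (a + 1) then - a else j).

Definition word_perm (n : nat) (u : seq 'I_n) : int -> int :=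
  foldr (fun i f => gen_perm i \o f) id u.

Definition wequiv (n : nat) (u v : seq 'I_n) : Prop :=
  forall j : int, word_perm u j = word_perm v j.

Definition is_length (n : nat) (u : seq 'I_n) (k : nat) : Prop :=
  (exists t : seq 'I_n, wequiv t u /\ size t = k) /\
  (forall t : seq 'I_n, wequiv t u -> (k <= size t)%N).

Definition in_Wp (n : nat) (u : seq 'I_n) : Prop :=
  forall i : 'I_n, (0 < i)%N ->
  forall k k' : nat, is_length u k -> is_length (i :: u) k' -> (k < k')%N.

(* ---------- Right action of W on {+,-}^n ----------------------------------
   A sign vector is a function nat -> bool on the indices 1..n (true = +). *)
Definition act_gen (n : nat) (i : 'I_n) (a : nat -> bool) : nat -> bool :=
  if (i : nat) == 0%N then
    fun k => if k == 1%N then ~~ a 2%N else if k == 2%N then ~~ a 1%N else a k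
  else
    fun k => if k == (i : nat) then a (i.+1) else if k == (i.+1) then a i else a k.

Definition alpha (n : nat) (u : seq 'I_n) : nat -> bool :=
  foldl (fun a i => act_gen i a) (fun _ => true) u.

Definition inP (n : nat) (j : int) : bool :=
  (j != 0) && (- (2 * n)%:Z <= j) && (j <= (2 * n)%:Z).

Definition ext_label (n : nat) (al : nat -> bool) (j : int) : bool :=
  if j < - n%:Z then true
  else if n%:Z < j then false
  else if 0 < j then al `|j|%N
  else ~~ al `|j|%N.

Definition is_matching (n : nat) (al : nat -> bool) (M : seq (int * int)) : Prop :=
  (forall ab, ab \in M ->
     [/\ inP n ab.1, inP n ab.2, ab.1 < ab.2,
         ext_label n al ab.1 = true & ext_label n al ab.2 = false]) /\
  (forall x, inP n x -> count (fun ab => (ab.1 == x) || (ab.2 == x)) M = 1%N) /\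
  (forall ab cd, ab \in M -> cd \in M ->
     ~ [/\ ab.1 < cd.1, cd.1 < ab.2 & ab.2 < cd.2]).

Definition crossing (ab : int * int) : bool := (ab.1 < 0) && (0 < ab.2).

(* y_1 < ... < y_{2k} : the positive endpoints of the arcs (-y, y) *)
Definition ys (M : seq (int * int)) : seq int :=
  sort (fun x y : int => x <= y) [seq ab.2 | ab <- M & crossing ab].

Definition cup_diagram (M : seq (int * int)) : seq (int * int) :=
  let y := ys M in
  [seq ab <- M | ~~ crossing ab] ++
  flatten [seq [:: (- nth 0 y (2 * j).+1, nth 0 y (2 * j));
                   (- nth 0 y (2 * j), nth 0 y (2 * j).+1)]
          | j <- iota 0 (size y)./2].

(* Parity is counting: the 2n negative points of P are all endpoints, an arc
   from a negative to a positive point uses one of them, any other arc zero or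
   two.  For injectivity, linked pairs start at negative points, so C(w) still
   records the labels of 1..n, i.e. the signs of w(1), ..., w(n) when w acts on
   {±1, ..., ±n} as a signed permutation.  With v = w^-1, the type D inversion
   number of v changes by exactly one under w |-> s_i w, upwards iff v has an
   ascent at i; as a v without descents is the identity (v has an even number of
   negative values), this inversion number is the length.  Hence w is in W^p iff
   v(1) < ... < v(n), and this sorted sequence lists the x with w(x) > 0, which
   the signs determine. *)

From mathcomp Require Import all_boot all_order all_algebra perm zify.
Import Order.TTheory GRing.Theory Num.Theory.
Local Open Scope ring_scope.
Set Implicit Arguments.
Unset Strict Implicit.
Unset Printing Implicit Defensive.

Lemma sorted_map_iota (T : Type) (r : rel T) (f : nat -> T) a m :
  (forall k, (a <= k)%N -> (k.+1 < a + m)%N -> r (f k) (f k.+1)) ->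
  sorted r [seq f k | k <- iota a m].
Proof.
rewrite sorted_map; elim: m a => [|[|m] IH] a step //=.
rewrite step ?leqnn ?addnS ?ltnS ?leq_addr //=.
by apply: (IH a.+1) => k ak km; apply: step; rewrite ?addSnnS; lia.
Qed.

Section SignedPermutations.
Variable n : nat.
Hypothesis n_gt1 : (1 < n)%N.
Implicit Types (u t : seq 'I_n) (i : 'I_n) (j x : int).

(* [gen_perm] spelled out as a proposition [lia] can use. *)
Definition gen_perm_spec (i : nat) (j g : int) : Prop :=
  (i = 0%N /\
    ((j = 1 /\ g = -2) \/ (j = 2 /\ g = -1) \/ (j = -1 /\ g = 2) \/ (j = -2 /\ g = 1) \/
     ((j <> 1 /\ j <> 2 /\ j <> -1 /\ j <> -2) /\ g = j))) \/
  ((0 < i)%N /\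
    ((j = i%:Z /\ g = i%:Z + 1) \/ (j = i%:Z + 1 /\ g = i%:Z) \/
     (j = - i%:Z /\ g = - (i%:Z + 1)) \/ (j = - (i%:Z + 1) /\ g = - i%:Z) \/
     ((j <> i%:Z /\ j <> i%:Z + 1 /\ j <> - i%:Z /\ j <> - (i%:Z + 1)) /\ g = j))).

Lemma gen_permP i j : gen_perm_spec i j (gen_perm i j).
Proof.
rewrite /gen_perm /gen_perm_spec; case: ifP => /eqP i0.
  by left; split=> //; repeat case: eqP => ?; lia.
by right; split; [lia|]; repeat case: eqP => ?; lia.
Qed.

Lemma gen_permK i : involutive (gen_perm i).
Proof.
move=> j; have := gen_permP i j; have := gen_permP i (gen_perm i j).
by rewrite /gen_perm_spec; lia.
Qed.

Lemma gen_permN i j : gen_perm i (- j) = - gen_perm i j.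
Proof. by have := gen_permP i j; have := gen_permP i (- j); rewrite /gen_perm_spec; lia. Qed.

Lemma gen_perm_out i j : j = 0 \/ n%:Z < `|j| -> gen_perm i j = j.
Proof. by have := ltn_ord i; have := gen_permP i j; rewrite /gen_perm_spec; lia. Qed.

Lemma gen_perm_range i j : 0 < `|j| <= n%:Z -> 0 < `|gen_perm i j| <= n%:Z.
Proof. by have := ltn_ord i; have := gen_permP i j; rewrite /gen_perm_spec; lia. Qed.

Lemma word_perm_rcons u i x : word_perm (rcons u i) x = word_perm u (gen_perm i x).
Proof. by elim: u => //= k u ->. Qed.

Lemma word_permK u : cancel (word_perm u) (word_perm (rev u)).
Proof.
by elim: u => //= i u IH x; rewrite rev_cons word_perm_rcons gen_permK.
Qed.

Lemma word_perm_revK u : cancel (word_perm (rev u)) (word_perm u).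
Proof. by have := word_permK (rev u); rewrite revK. Qed.

Lemma word_perm_inj u : injective (word_perm u).
Proof. exact: can_inj (word_permK u). Qed.

Lemma word_permN u x : word_perm u (- x) = - word_perm u x.
Proof. by elim: u x => //= i u IH x; rewrite IH gen_permN. Qed.

Lemma word_perm_out u x : x = 0 \/ n%:Z < `|x| -> word_perm u x = x.
Proof. by elim: u => //= i u IH /[dup] /IH ->; apply: gen_perm_out. Qed.

Lemma word_perm_range u x : 0 < `|x| <= n%:Z -> 0 < `|word_perm u x| <= n%:Z.
Proof. by elim: u => //= i u IH /IH; apply: gen_perm_range. Qed.

Lemma wequiv_rev t u : wequiv t u -> wequiv (rev t) (rev u).
Proof.
by move=> tu x; rewrite -{1}(word_perm_revK u x) -tu word_permK.
Qed.

Lemma word_perm_sgnN u (k : nat) : (1 <= k <= n)%N ->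
  (0 < word_perm u (- k%:Z)) = ~~ (0 < word_perm u k%:Z).
Proof.
move=> hk; rewrite word_permN oppr_gt0.
by have := @word_perm_range u k%:Z; case: ltrgt0P => //; lia.
Qed.

Lemma act_gen_sign i u (a : nat -> bool) :
  (forall k, (1 <= k <= n)%N -> a k = (0 < word_perm u k%:Z)) ->
  forall k, (1 <= k <= n)%N -> act_gen i a k = (0 < word_perm (rcons u i) k%:Z).
Proof.
move=> ua k hk; rewrite word_perm_rcons /act_gen.
have := ltn_ord i; have := gen_permP i k%:Z; rewrite /gen_perm_spec.
case: ifP => /eqP i0 gk ltin.
- case: eqP => [k1|k1]; last case: eqP => [k2|k2].
  + by rewrite (_ : gen_perm i k%:Z = - 2%:Z) ?word_perm_sgnN ?ua //; lia.
  + by rewrite (_ : gen_perm i k%:Z = - 1%:Z) ?word_perm_sgnN ?ua //; lia.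
  + by rewrite (_ : gen_perm i k%:Z = k%:Z) ?ua //; lia.
- case: eqP => [ki|ki]; last case: eqP => [ki1|ki1].
  + by rewrite (_ : gen_perm i k%:Z = i.+1%:Z) ?ua //; lia.
  + by rewrite (_ : gen_perm i k%:Z = i%:Z) ?ua //; lia.
  + by rewrite (_ : gen_perm i k%:Z = k%:Z) ?ua //; lia.
Qed.

Lemma alphaE u (k : nat) : (1 <= k <= n)%N -> alpha u k = (0 < word_perm u k%:Z).
Proof.
elim/last_ind: u k => [|u i IH] k hk; first by rewrite /alpha /=; lia.
by rewrite /alpha foldl_rcons; apply: act_gen_sign.
Qed.

(* In type D a pair of positions p < q with values a, b is an inversion when
   a > b, and contributes once more when a + b < 0. *)
Definition pair_inv (a b : int) : nat := ((b < a)%R + (a + b < 0)%R)%N.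

Definition inv_count (v : int -> int) : nat :=
  \sum_(pq : 'I_n * 'I_n | (pq.1 < pq.2)%N) pair_inv (v pq.1.+1%:Z) (v pq.2.+1%:Z).

Definition ascent i (v : int -> int) : bool :=
  if i == 0 :> nat then 0 < v 1%:Z + v 2%:Z else v i%:Z < v i.+1%:Z.

Lemma pred_ord_lt i : (i.-1 < n)%N.
Proof. exact: leq_ltn_trans (leq_pred i) (ltn_ord i). Qed.

Lemma succ_pred_ord_lt i : (i.-1.+1 < n)%N.
Proof. by case: i => -[|k] /=. Qed.

(* The generator s_i permutes the positions i.-1 and i (counted from 0), the
   positions 0 and 1 for s_0. *)
Definition swap_lo i : 'I_n := Ordinal (pred_ord_lt i).
Definition swap_hi i : 'I_n := Ordinal (succ_pred_ord_lt i).
Definition pos_tperm i : {perm 'I_n} := tperm (swap_lo i) (swap_hi i).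

Lemma pos_tpermP i (k : 'I_n) :
  (k = i.-1 :> nat /\ pos_tperm i k = i.-1.+1 :> nat) \/
  (k = i.-1.+1 :> nat /\ pos_tperm i k = i.-1 :> nat) \/
  (k <> i.-1 :> nat /\ k <> i.-1.+1 :> nat /\ pos_tperm i k = k :> nat).
Proof.
rewrite /pos_tperm; case: tpermP => [->|->|ki ki1]; [by left | by right; left|].
by right; right; split; [|split] => // e; [apply: ki | apply: ki1]; apply: val_inj.
Qed.

Lemma gen_perm_pos i (k : 'I_n) :
  gen_perm i k.+1%:Z =
    if (i == 0 :> nat) && (k < 2)%N then - (pos_tperm i k).+1%:Z else (pos_tperm i k).+1%:Z.
Proof.
have := gen_permP i k.+1%:Z; have := pos_tpermP i k; rewrite /gen_perm_spec.
by case: ifP => /andP; lia.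
Qed.

Lemma pair_invNl a b : pair_inv (- a) b = pair_inv a b.
Proof. by rewrite /pair_inv; lia. Qed.

Lemma pair_inv_swap a b : a != b ->
  (pair_inv b a + ~~ (a < b)%R = pair_inv a b + (a < b)%R)%N.
Proof. by rewrite /pair_inv [b + a]addrC; case: ltgtP => //= _ _; lia. Qed.

Lemma pair_inv_oppC a b : a + b != 0 ->
  (pair_inv (- b) (- a) + ~~ (0 < a + b)%R = pair_inv a b + (0 < a + b)%R)%N.
Proof.
rewrite /pair_inv ltrN2 -opprD oppr_lt0 [b + a]addrC => ab0.
by case: (ltrgt0P (a + b)) ab0 => //= _ _; lia.
Qed.

Lemma gen_perm0 i : i = 0%N :> nat -> gen_perm i 1%:Z = - 2%:Z /\ gen_perm i 2%:Z = - 1%:Z.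
Proof. by have := gen_permP i 1%:Z; have := gen_permP i 2%:Z; rewrite /gen_perm_spec; lia. Qed.

Lemma gen_perm_gt0 i : (0 < i)%N -> gen_perm i i%:Z = i.+1%:Z /\ gen_perm i i.+1%:Z = i%:Z.
Proof. by have := gen_permP i i; have := gen_permP i i.+1; rewrite /gen_perm_spec; lia. Qed.

Section InversionStep.
Variables (v : int -> int) (i : 'I_n).
Hypotheses (v_inj : injective v) (vN : {morph v : x / - x}).

Let special : 'I_n * 'I_n := (swap_lo i, swap_hi i).
Let tperm2 (pq : 'I_n * 'I_n) := (pos_tperm i pq.1, pos_tperm i pq.2).

Lemma tperm2_inj : injective tperm2.
Proof. by apply: (can_inj (g := tperm2)) => -[p q]; rewrite /tperm2 /= !tpermK. Qed.

Lemma tperm2_pair_lt pq :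
  ((tperm2 pq).1 < (tperm2 pq).2)%N && (tperm2 pq != special) = (pq.1 < pq.2)%N && (pq != special).
Proof.
case: pq => p q; rewrite /tperm2 /special !xpair_eqE -!val_eqE /=.
by have := pos_tpermP i p; have := pos_tpermP i q; lia.
Qed.

Lemma pair_inv_gen_perm (p q : 'I_n) : (p < q)%N -> (p, q) != special ->
  pair_inv (v (gen_perm i p.+1%:Z)) (v (gen_perm i q.+1%:Z)) =
  pair_inv (v (pos_tperm i p).+1%:Z) (v (pos_tperm i q).+1%:Z).
Proof.
rewrite /special xpair_eqE -!val_eqE /= => pq nps; rewrite !gen_perm_pos.
have := pos_tpermP i p; have := pos_tpermP i q.
case: ifP => /andP hq; case: ifP => /andP hp; rewrite ?vN ?pair_invNl //; lia.
Qed.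

Lemma pair_inv_special :
  (pair_inv (v (gen_perm i i.-1.+1%:Z)) (v (gen_perm i i.-1.+2%:Z)) + ~~ ascent i v =
   pair_inv (v i.-1.+1%:Z) (v i.-1.+2%:Z) + ascent i v)%N.
Proof.
rewrite /ascent; case: (posnP i) => [i0|i_gt0].
  rewrite i0 /=; have [-> ->] := gen_perm0 i0; rewrite !vN; apply: pair_inv_oppC.
  by rewrite addr_eq0 -vN; apply/eqP => /v_inj; lia.
rewrite prednK //; have [-> ->] := gen_perm_gt0 i_gt0.
by apply: pair_inv_swap; apply/eqP => /v_inj; lia.
Qed.

Lemma inv_count_step :
  (inv_count (v \o gen_perm i) + ~~ ascent i v = inv_count v + ascent i v)%N.
Proof.
have special_lt : (special.1 < special.2)%N by [].
have rest : \sum_(pq : 'I_n * 'I_n | (pq.1 < pq.2)%N && (pq != special))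
              pair_inv (v (gen_perm i pq.1.+1%:Z)) (v (gen_perm i pq.2.+1%:Z)) =
            \sum_(pq : 'I_n * 'I_n | (pq.1 < pq.2)%N && (pq != special))
              pair_inv (v pq.1.+1%:Z) (v pq.2.+1%:Z).
  rewrite [RHS](reindex_inj tperm2_inj); apply: eq_big => [pq|[p q] /andP[pq nps]].
    by rewrite tperm2_pair_lt.
  exact: pair_inv_gen_perm.
rewrite /inv_count (bigD1 special special_lt) [in RHS](bigD1 special special_lt) /= rest.
by rewrite addnAC pair_inv_special addnAC.
Qed.

End InversionStep.

Lemma eq_inv_count (v w : int -> int) : v =1 w -> inv_count v = inv_count w.
Proof. by move=> vw; apply: eq_bigr => pq _; rewrite !vw. Qed.

Lemma inv_count_id : inv_count id = 0%N.
Proof. by apply: big1 => -[p q] /= pq; rewrite /pair_inv; lia. Qed.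

Definition neg_count (v : int -> int) : nat := \sum_(k : 'I_n) (v k.+1%:Z < 0)%R.

Lemma eq_neg_count (v w : int -> int) : v =1 w -> neg_count v = neg_count w.
Proof. by move=> vw; apply: eq_bigr => k _; rewrite vw. Qed.

Lemma odd_neg_count_gen_perm (v : int -> int) i : {morph v : x / - x} ->
  (forall k : 'I_n, v k.+1%:Z != 0) ->
  odd (neg_count (v \o gen_perm i)) = odd (neg_count v).
Proof.
move=> vN vnz; have lo_hi : swap_lo i != swap_hi i by rewrite -val_eqE /= neq_ltn ltnSn.
rewrite /neg_count (bigD1 (swap_lo i)) // (bigD1 (swap_hi i)) /=; last by rewrite eq_sym.
rewrite [in RHS](bigD1 (swap_lo i)) // [in RHS](bigD1 (swap_hi i)) /=; last by rewrite eq_sym.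
have -> : (\sum_(k | (k != swap_lo i) && (k != swap_hi i)) (v (gen_perm i k.+1%:Z) < 0)%R =
           \sum_(k | (k != swap_lo i) && (k != swap_hi i)) (v k.+1%:Z < 0)%R)%N.
  apply: eq_bigr => k; rewrite -!val_eqE /= gen_perm_pos => /andP[klo khi].
  have tk : pos_tperm i k = k :> nat by have := pos_tpermP i k; lia.
  by case: ifP => [/andP ?|_]; [lia | rewrite tk].
case: (posnP i) => [i0|i_gt0].
  rewrite i0 /=; have [-> ->] := gen_perm0 i0; rewrite !vN !oppr_lt0 !oddD.
  have := vnz (swap_lo i); have := vnz (swap_hi i); rewrite /= i0 /=.
  by rewrite !oddb; case: (odd _); case: (ltrgt0P (v 1%:Z)); case: (ltrgt0P (v 2%:Z)).
rewrite prednK //; have [-> ->] := gen_perm_gt0 i_gt0.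
by rewrite addnCA.
Qed.

Lemma neg_count_word_perm_even t : ~~ odd (neg_count (word_perm t)).
Proof.
elim/last_ind: t => [|t i IH].
  by rewrite /neg_count big1 // => k _; apply/negbTE; rewrite -leNgt.
rewrite (eq_neg_count (word_perm_rcons t i)) (odd_neg_count_gen_perm i (word_permN t)) //.
by move=> k; have := ltn_ord k; have := @word_perm_range t k.+1%:Z; lia.
Qed.

Lemma word_perm_eq_pos t t' :
  (forall k : nat, (1 <= k <= n)%N -> word_perm t k%:Z = word_perm t' k%:Z) ->
  word_perm t =1 word_perm t'.
Proof.
move=> tt' x; case: (boolP (0 < `|x| <= n%:Z)) => xr; last by rewrite !word_perm_out //; lia.
have [x_gt0|x_lt0] : 0 < x \/ x < 0 by lia.
  have -> : x = `|x|%N%:Z by lia.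
  by apply: tt'; lia.
have -> : x = - `|x|%N%:Z by lia.
by rewrite !word_permN tt' //; lia.
Qed.

Lemma ascents_word_perm_id t : (forall i, ascent i (word_perm t)) -> word_perm t =1 id.
Proof.
move=> asc; set v := word_perm t.
have vr k : (1 <= k <= n)%N -> 0 < `|v k%:Z| <= n%:Z by move=> hk; apply: word_perm_range; lia.
have inc k : (1 <= k < n)%N -> v k%:Z < v k.+1%:Z.
  by case/andP=> k1 kn; have := asc (Ordinal kn); rewrite /ascent /= (negPf (lt0n_neq0 k1)).
have v12 : 0 < v 1%:Z + v 2%:Z by exact: asc (Ordinal (ltnW n_gt1)).
have chain (k j : nat) : (1 <= k <= j)%N -> (j <= n)%N -> v k%:Z + j%:Z - k%:Z <= v j%:Z.
  case/andP=> k1; elim: j => [|j IH]; first lia.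
  rewrite leq_eqVlt => /orP[/eqP <-|kj] jn; first lia.
  by have := IH kj (ltnW jn); have := inc j; lia.
have v2 : 2 <= v 2%:Z by have := inc 1%N; have := vr 1%N; lia.
have vk k : (2 <= k <= n)%N -> v k%:Z = k%:Z.
  by move=> hk; have := chain 2%N k; have := chain k n; have := vr n; lia.
have absv1 : `|v 1%:Z| = 1.
  case: (ltnP `|v 1%:Z|%N 2) => [|j2]; first by have := vr 1%N; lia.
  have vj := vk `|v 1%:Z|%N ltac:(have := vr 1%N; lia).
  have : v 1%:Z = v `|v 1%:Z|%N%:Z \/ v 1%:Z = v (- `|v 1%:Z|%N%:Z).
    by rewrite /v word_permN -/v vj; lia.
  by case=> /word_perm_inj; lia.
(* v 1 = -1 would leave exactly one negative value. *)
have v1 : v 1%:Z = 1.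
  have [//|v1N] : v 1%:Z = 1 \/ v 1%:Z = -1 by lia.
  have := neg_count_word_perm_even t.
  rewrite -/v /neg_count (bigD1 (Ordinal (ltnW n_gt1))) //= v1N big1 // => k k0.
  have kn := ltn_ord k; rewrite -val_eqE /= in k0.
  by rewrite vk ?ltNge ?le0z_nat //; lia.
apply: (word_perm_eq_pos (t' := [::])) => k hk /=.
by case: (ltnP k 2) => [k1|k2]; [have -> : k = 1%N by lia | apply: vk; lia].
Qed.

Definition invn u : nat := inv_count (word_perm (rev u)).

Lemma word_perm_rev_cons i u : word_perm (rev (i :: u)) =1 word_perm (rev u) \o gen_perm i.
Proof. by move=> x; rewrite rev_cons word_perm_rcons. Qed.

Lemma invn_cons i u :
  (invn (i :: u) + ~~ ascent i (word_perm (rev u)) = invn u + ascent i (word_perm (rev u)))%N.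
Proof.
rewrite /invn (eq_inv_count (word_perm_rev_cons i u)).
exact: inv_count_step (@word_perm_inj _) (word_permN _).
Qed.

Lemma invn_wequiv t u : wequiv t u -> invn t = invn u.
Proof. by move/wequiv_rev/eq_inv_count. Qed.

Lemma invn_le_size u : (invn u <= size u)%N.
Proof.
elim: u => [|i u IH]; first by rewrite /invn inv_count_id.
by have := invn_cons i u; case: ascent => /=; lia.
Qed.

Lemma wequiv_nil_of_ascents u : (forall i, ascent i (word_perm (rev u))) -> wequiv [::] u.
Proof.
by move=> /ascents_word_perm_id asc x; rewrite -{2}[x]asc word_perm_revK.
Qed.

Lemma invn_word u : exists2 t, wequiv t u & size t = invn u.
Proof.
move eN : (invn u) => N; elim: N u eN => [|N IH] u uN;
  case: (pickP (fun i => ~~ ascent i (word_perm (rev u)))) => [i desc|asc].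
- by have := invn_cons i u; rewrite (negPf desc) uN; lia.
- by exists [::] => //; apply: wequiv_nil_of_ascents => i; apply/negbFE/asc.
- have := invn_cons i u; rewrite (negPf desc) uN addn1 addn0 => -[iuN].
  have [t tiu st] := IH _ iuN; exists (i :: t); last by rewrite /= st.
  by move=> x; rewrite /= tiu /= gen_permK.
- have := invn_wequiv (wequiv_nil_of_ascents (fun i => negbFE (asc i))).
  by rewrite uN /invn /= inv_count_id.
Qed.

Lemma is_length_invn u : is_length u (invn u).
Proof.
split; first by have [t] := invn_word u; exists t.
by move=> t /invn_wequiv <-; apply: invn_le_size.
Qed.

Lemma in_Wp_ascent u i : in_Wp u -> (0 < i)%N -> ascent i (word_perm (rev u)).
Proof.
move=> uWp i_gt0; apply: contraT => desc.
have := uWp i i_gt0 _ _ (is_length_invn u) (is_length_invn (i :: u)).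
by have := invn_cons i u; rewrite (negPf desc); lia.
Qed.

Lemma in_Wp_sorted u : in_Wp u -> sorted <%R [seq word_perm (rev u) k%:Z | k <- iota 1 n].
Proof.
move=> uWp; apply: sorted_map_iota => k k1 kn.
have kn' : (k < n)%N by lia.
by have := @in_Wp_ascent u (Ordinal kn') uWp k1; rewrite /ascent /= (negPf (lt0n_neq0 k1)).
Qed.

Lemma mem_word_perm_rev u x :
  (x \in [seq word_perm (rev u) k%:Z | k <- iota 1 n]) =
  (0 < `|x| <= n%:Z) && (0 < word_perm u x).
Proof.
apply/mapP/andP => [[k] |[xr ux]].
  rewrite mem_iota => kr ->; rewrite word_perm_revK.
  by have := @word_perm_range (rev u) k%:Z; lia.
exists `|word_perm u x|%N; first by rewrite mem_iota; have := word_perm_range u xr; lia.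
by rewrite (_ : `|word_perm u x|%N%:Z = word_perm u x) ?word_permK //; lia.
Qed.

Lemma in_Wp_sign_inj u u' : in_Wp u -> in_Wp u' ->
  (forall k : nat, (1 <= k <= n)%N -> (0 < word_perm u k%:Z) = (0 < word_perm u' k%:Z)) ->
  wequiv u u'.
Proof.
move=> uWp u'Wp sgn.
have sgnx x : 0 < `|x| <= n%:Z -> (0 < word_perm u x) = (0 < word_perm u' x).
  move=> xr; have [x_gt0|x_lt0] : 0 < x \/ x < 0 by lia.
    have -> : x = `|x|%N%:Z by lia.
    by apply: sgn; lia.
  have -> : x = - `|x|%N%:Z by lia.
  by rewrite !word_perm_sgnN ?sgn //; lia.
have eq_inv_seq : [seq word_perm (rev u) k%:Z | k <- iota 1 n] =
                  [seq word_perm (rev u') k%:Z | k <- iota 1 n].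
  apply: lt_sorted_eq; rewrite ?in_Wp_sorted // => x.
  by rewrite !mem_word_perm_rev; case: (boolP (0 < `|x| <= n%:Z)) => // /sgnx ->.
suff: wequiv (rev u) (rev u') by move/wequiv_rev; rewrite !revK.
apply: word_perm_eq_pos => k kr.
have := congr1 (nth 0 ^~ k.-1) eq_inv_seq.
by rewrite !(nth_map 0%N) ?size_iota ?nth_iota ?add1n ?prednK //; lia.
Qed.

End SignedPermutations.

Section Matchings.
Variables (n : nat) (al : nat -> bool).
Implicit Types (M : seq (int * int)) (x : int).

Definition endpoints M : seq int := flatten [seq [:: ab.1; ab.2] | ab <- M].

Lemma count_mem_endpoints M x : all (fun ab : int * int => ab.1 < ab.2) M ->
  count_mem x (endpoints M) = count (fun ab : int * int => (ab.1 == x) || (ab.2 == x)) M.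
Proof.
elim: M => [|[a b] M IH] //= /andP[/= ab abM].
rewrite IH // addnA; congr (_ + _)%N.
by case: (eqVneq a x) => [<-|] /=; rewrite ?addn0 // (gt_eqF ab).
Qed.

Lemma count_neg_endpoints M : all (fun ab : int * int => (ab.1 < ab.2) && (ab.2 != 0)) M ->
  count (< 0) (endpoints M) =
  (count crossing M + 2 * count (fun ab : int * int => ab.2 < 0)%R M)%N.
Proof.
elim: M => [|[a b] M IH] //= /andP[/= /andP[ab /eqP b0] abM].
rewrite IH // /crossing /=.
by case: (boolP (a < 0)); case: (boolP (b < 0)); case: (boolP (0 < b)) => /= ? ? ?; lia.
Qed.

Definition points : seq int :=
  [seq - k%:Z | k <- iota 1 (2 * n)] ++ [seq k%:Z | k <- iota 1 (2 * n)].

Lemma mem_points x : (x \in points) = inP n x.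
Proof.
rewrite /points /inP mem_cat; apply/orP/idP => [[]|xP].
- by case/mapP => k; rewrite mem_iota => kr ->; lia.
- by case/mapP => k; rewrite mem_iota => kr ->; lia.
have [x_lt0|x_gt0] : x < 0 \/ 0 < x by lia.
  by left; apply/mapP; exists `|x|%N; rewrite ?mem_iota; lia.
by right; apply/mapP; exists `|x|%N; rewrite ?mem_iota; lia.
Qed.

Lemma uniq_points : uniq points.
Proof.
rewrite cat_uniq !map_inj_uniq ?iota_uniq //=; try by move=> a b; lia.
rewrite andbT; apply/hasP => -[_ /mapP[k k_in ->] /mapP[j j_in]].
by move: k_in j_in; rewrite !mem_iota; lia.
Qed.

Lemma count_neg_points : count (< 0) points = (2 * n)%N.
Proof.
rewrite count_cat !count_map (@eq_in_count _ _ predT); last first.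
  by move=> k; rewrite mem_iota /=; lia.
rewrite [X in (_ + X)%N](@eq_in_count _ _ pred0); last first.
  by move=> k; rewrite mem_iota /=; lia.
by rewrite count_predT count_pred0 size_iota addn0.
Qed.

Lemma matching_crossing_even M : is_matching n al M -> ~~ odd (count crossing M).
Proof.
move=> [arcs [once _]].
have lt_ends : all (fun ab : int * int => (ab.1 < ab.2) && (ab.2 != 0)) M.
  by apply/allP => ab /arcs[_ /andP[/andP[b0 _] _] ab12 _ _]; rewrite ab12.
have perm_ends : perm_eq (endpoints M) points.
  apply/allP => x _; apply/eqP.
  rewrite count_mem_endpoints; last by apply: sub_all lt_ends => ab /andP[].
  rewrite count_uniq_mem ?uniq_points // mem_points.
  case: (boolP (inP n x)) => [/once //|xP].
  rewrite (@eq_in_count _ _ pred0) ?count_pred0 // => ab /arcs[aP bP _ _ _].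
  by apply/negbTE; apply: contra xP => /orP[] /eqP <-.
have := count_neg_points; rewrite -(seq.permP perm_ends) count_neg_endpoints //.
by move/(congr1 odd); rewrite oddD !oddM /= addbF => ->.
Qed.

Lemma ext_label_left M x : is_matching n al M -> inP n x ->
  ext_label n al x = has (fun ab : int * int => ab.1 == x) M.
Proof.
move=> [arcs [once _]] xP.
have : has (fun ab : int * int => (ab.1 == x) || (ab.2 == x)) M by rewrite has_count once.
case/hasP=> ab abM /orP[] /eqP <-; have [_ _ _ l1 l2] := arcs ab abM.
  by rewrite l1; apply/esym/hasP; exists ab.
rewrite l2; apply/esym/hasP => -[cd cdM /eqP cd1].
by have [_ _ _] := arcs cd cdM; rewrite cd1 l2.
Qed.

Lemma ext_label_pos (k : nat) : (1 <= k <= n)%N -> ext_label n al k%:Z = al k.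
Proof.
move=> kr; rewrite /ext_label ifF; last by apply/negbTE; lia.
by rewrite ifF ?ifT //; [lia | apply/negbTE; lia].
Qed.

End Matchings.

(* Linked pairs start at negative points. *)
Lemma has_left_cup_diagram M (k : int) : 0 < k ->
  has (fun ab : int * int => ab.1 == k) (cup_diagram M) =
  has (fun ab : int * int => ab.1 == k) M.
Proof.
move=> k_gt0; rewrite /cup_diagram has_cat.
have ys_ge0 m : 0 <= nth 0 (ys M) m.
  case: (ltnP m (size (ys M))) => [/(mem_nth 0)|]; last by move/(nth_default 0) ->.
  by rewrite /ys mem_sort => /mapP[cd]; rewrite mem_filter => /andP[/andP[_ ?] _] ->; lia.
set linked := flatten _.
have -> : has (fun ab : int * int => ab.1 == k) linked = false.
  apply/negbTE; apply/hasP => -[ab /flattenP[_ /mapP[j _ ->]]]; rewrite !inE.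
  by case/orP=> /eqP -> /= /eqP ek; move: k_gt0; rewrite -ek oppr_gt0 ltNge ys_ge0.
rewrite orbF; apply/hasP/hasP => -[ab abM ek]; exists ab => //.
  by move: abM; rewrite mem_filter => /andP[].
by rewrite mem_filter abM /crossing (eqP ek) andbT; lia.
Qed.

Theorem lemma2p7 (n : nat) (Hn : (4 <= n)%N) :
  (forall (u : seq 'I_n) (M : seq (int * int)),
     in_Wp u -> is_matching n (alpha u) M -> ~~ odd (count crossing M)) /\
  (forall (u v : seq 'I_n) (M M' : seq (int * int)),
     in_Wp u -> in_Wp v ->
     is_matching n (alpha u) M -> is_matching n (alpha v) M' ->
     cup_diagram M =i cup_diagram M' -> wequiv u v).
Proof.
have n_gt1 : (1 < n)%N by apply: leq_trans Hn.
split=> [u M _|u v M M' uWp vWp uM vM' cupE]; first exact: matching_crossing_even.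
apply: (in_Wp_sign_inj n_gt1 uWp vWp) => k kr.
have kP : inP n k%:Z.
  rewrite /inP -!andbA; apply/and3P; split; lia.
rewrite -!(alphaE n_gt1) // -!(ext_label_pos _ kr) (ext_label_left uM kP) (ext_label_left vM' kP).
have k_gt0 : 0 < k%:Z by lia.
by rewrite -(has_left_cup_diagram M k_gt0) -(has_left_cup_diagram M' k_gt0) (eq_has_r cupE).
Qed.
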